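(* Let $f(x)$ be a complex-valued function of a real variable defined to the right of $0$, and let $g(x)=f(1/\log x)$, defined in a neighbourhood of $\infty$ (equivalently, let $g$ be any complex-valued function defined in a neighbourhood of $\infty$ and $f(x)=g(e^{1/x})$ for $x>0$ small). Let $a_n\in\mathbb C$ for $n\ge0$, let $N$ be a positive integer, and let $L(x)$ be any function with $L(x)=\log x+o\big((\log x)^{-(N-2)}\big)$ $(x\to\infty)$. Then the following asymptotic expansions (each with terms $n=0,\dots,N$, i.e. of order $N+1$) are equivalent: (1) $f(x)\sim\sum_{n=0}^N a_nx^n$ $(x\to0^+)$; (2) $f(1/x)=g(e^x)\sim\sum_{n=0}^N\frac{a_n}{x^n}$ $(x\to\infty)$; (3) $g(x)\sim\sum_{n=0}^N\frac{a_n}{L(x)^n}$ $(x\to\infty)$; (4) $g(x)\sim\sum_{n=0}^N\frac{a_n}{(\log x)^n}$ $(x\to\infty)$; (5) $g(x)\sim\sum_{n=0}^N\frac{a_n}{(H_x-\gamma)^n}$ $(x\to\infty)$; (6) $g(x)\sim\sum_{n=0}^N\frac{a_n}{\Psi(x)^n}$ $(x\to\infty)$.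
   Context: $\gamma$ is the Euler–Mascheroni constant, $\Psi=\Gamma'/\Gamma$ is the digamma function, and $H_x=\Psi(x+1)+\gamma=\int_0^1\frac{1-t^x}{1-t}dt$ for real $x>0$ (interpolating the harmonic numbers). An asymptotic expansion $h\sim\sum_{n=0}^N a_n\varphi_n$ of order $N+1$ with respect to an asymptotic sequence $\{\varphi_n\}$ (i.e. $\varphi_{n+1}=o(\varphi_n)$) means $h-\sum_{k=0}^n a_k\varphi_k=o(\varphi_n)$ for all $n\le N$ (equivalently for $n=N$). *)

From Stdlib Require Import Reals.
From Coquelicot Require Import Coquelicot.
Open Scope R_scope.

Definition asymp_expansion (F : (R -> Prop) -> Prop) (h : R -> C)
  (a : nat -> C) (phi : nat -> R -> R) (N : nat) : Prop :=
  forall n : nat, (n <= N)%nat ->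
  forall eps : R, 0 < eps ->
  F (fun x => Cmod (Cminus (h x)
        (sum_n (fun k => Cmult (a k) (RtoC (phi k x))) n))
      <= eps * Rabs (phi n x)).

Definition little_o_R (F : (R -> Prop) -> Prop) (u v : R -> R) : Prop :=
  forall eps : R, 0 < eps -> F (fun x => Rabs (u x) <= eps * Rabs (v x)).

Definition euler_gamma : R :=
  real (Lim_seq (fun n : nat =>
    sum_n (fun k : nat => / INR (S k)) (pred n) - ln (INR n))).

Definition Hx (x : R) : R :=
  RInt (fun t => (1 - Rpower t x) / (1 - t)) 0 1.

(* Digamma function via the identity H_x = Psi(x+1) + gamma,
   i.e. Psi(x) = H_(x-1) - gamma (valid for x > 1). *)
Definition Psi (x : R) : R := Hx (x - 1) - euler_gamma.

(* The changes of variable x |-> 1/x and t |-> exp (1/t) carry expansions term by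
   term, which gives (1) <-> (2) <-> (4).  The remaining equivalences rest on one
   comparison principle: if l >= 1 and (L - l) l^(N-2) -> 0, then l/2 <= L <= 2 l
   eventually and, since |L^k - l^k| <= k |L - l| (2 l)^(k-1), we get
   1/l^k - 1/L^k = o(1/l^n) for k <= n <= N; hence expansions in the scales 1/l^n and
   1/L^n are equivalent.  It is applied with l = log x and L the given function, or
   L = H_x - gamma, or L = Psi(x).  For the last two, H is nondecreasing, equals the
   harmonic numbers at integers, and H_n - log(n+1) <= gamma <= H_n - log n; this
   sandwiches H_y - gamma within 4/x of log x for x - 1 <= y <= x, while (log x)^N = o(x). *)

From Stdlib Require Import Reals Lra Lia Psatz Factorial.
From Coquelicot Require Import Coquelicot.
Open Scope R_scope.

(** * Asymptotic expansions under change of variable and of scale *)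

Definition bigO_R (F : (R -> Prop) -> Prop) (u v : R -> R) : Prop :=
  exists C, 0 <= C /\ F (fun x => Rabs (u x) <= C * Rabs (v x)).

Lemma filter_forall_le {T : Type} (F : (T -> Prop) -> Prop) {FF : Filter F}
    (P : nat -> T -> Prop) (n : nat) :
  (forall k, (k <= n)%nat -> F (P k)) ->
  F (fun x => forall k, (k <= n)%nat -> P k x).
Proof.
  induction n as [|n IH]; intros HP.
  - apply (filter_imp (P 0%nat)); [|apply HP; lia].
    intros x Hx k Hk. replace k with 0%nat by lia. exact Hx.
  - apply (filter_imp (fun x => (forall k, (k <= n)%nat -> P k x) /\ P (S n) x)).
    + intros x [Hle HS] k Hk.
      destruct (Nat.eq_dec k (S n)) as [->|Hne]; [exact HS|apply Hle; lia].
    + apply filter_and; [apply IH; auto|apply HP; lia].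
Qed.

Lemma little_o_bigO_trans (F : (R -> Prop) -> Prop) {FF : Filter F} (u v w : R -> R) :
  little_o_R F u v -> bigO_R F v w -> little_o_R F u w.
Proof.
  intros Huv [C [HC Hvw]] eps Heps.
  assert (Hd : 0 < eps / (C + 1)) by (apply Rdiv_lt_0_compat; lra).
  generalize (filter_and _ _ (Huv _ Hd) Hvw). apply filter_imp.
  intros x [H1 H2].
  assert (eps / (C + 1) * (C * Rabs (w x)) <= eps * Rabs (w x)).
  { replace (eps * Rabs (w x)) with (eps / (C + 1) * ((C + 1) * Rabs (w x))) by (field; lra).
    pose proof (Rabs_pos (w x)). apply Rmult_le_compat_l; nra. }
  assert (eps / (C + 1) * Rabs (v x) <= eps / (C + 1) * (C * Rabs (w x)))
    by (apply Rmult_le_compat_l; lra).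
  lra.
Qed.

Lemma Cmod_sum_n_sub_le (a : nat -> C) (p q : nat -> R) (n : nat) (d : R) :
  (forall k, (k <= n)%nat -> Rabs (p k - q k) <= d) ->
  Cmod (Cminus (sum_n (fun k => Cmult (a k) (p k)) n)
               (sum_n (fun k => Cmult (a k) (q k)) n))
  <= d * sum_n (fun k => Cmod (a k)) n.
Proof.
  induction n as [|n IH]; intros Hpq.
  - rewrite !sum_O.
    replace (Cminus (Cmult (a 0%nat) (p 0%nat)) (Cmult (a 0%nat) (q 0%nat)))
      with (Cmult (a 0%nat) (RtoC (p 0%nat - q 0%nat)))
      by (destruct (a 0%nat); apply injective_projections; simpl; ring).
    rewrite Cmod_mult, Cmod_R.
    pose proof (Hpq 0%nat (le_n _)). pose proof (Cmod_ge_0 (a 0%nat)). nra.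
  - pose proof (IH (fun k Hk => Hpq k (le_S _ _ Hk))) as IHn.
    rewrite !sum_Sn. unfold plus; simpl.
    set (sp := sum_n (fun k => Cmult (a k) (p k)) n) in *.
    set (sq := sum_n (fun k => Cmult (a k) (q k)) n) in *.
    replace (Cminus (Cplus sp (Cmult (a (S n)) (p (S n)))) (Cplus sq (Cmult (a (S n)) (q (S n)))))
      with (Cplus (Cminus sp sq) (Cmult (a (S n)) (RtoC (p (S n) - q (S n)))))
      by (destruct sp, sq, (a (S n)); apply injective_projections; simpl; ring).
    eapply Rle_trans; [apply Cmod_triangle|]. rewrite Cmod_mult, Cmod_R.
    pose proof (Hpq (S n) (le_n _)). pose proof (Cmod_ge_0 (a (S n))). nra.
Qed.

Lemma sum_n_Cmod_ge_0 (a : nat -> C) (n : nat) : 0 <= sum_n (fun k => Cmod (a k)) n.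
Proof.
  induction n as [|n IH]; [rewrite sum_O; apply Cmod_ge_0|].
  rewrite sum_Sn. unfold plus; simpl. pose proof (Cmod_ge_0 (a (S n))). lra.
Qed.

Lemma asymp_expansion_comp (F G : (R -> Prop) -> Prop) {FF : Filter F} (u : R -> R)
    (h1 h2 : R -> C) (a : nat -> C) (phi1 phi2 : nat -> R -> R) (N : nat) :
  filterlim u F G ->
  (forall x, h2 (u x) = h1 x) -> (forall k x, phi2 k (u x) = phi1 k x) ->
  asymp_expansion G h2 a phi2 N -> asymp_expansion F h1 a phi1 N.
Proof.
  intros Hu Hh Hphi H n Hn eps Heps.
  generalize (Hu _ (H n Hn eps Heps)). unfold filtermap. apply filter_imp. intros x.
  rewrite Hh, Hphi, (sum_n_ext _ (fun k => Cmult (a k) (phi1 k x))); [auto|].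
  intros k. now rewrite Hphi.
Qed.

Lemma asymp_expansion_change_var (F G : (R -> Prop) -> Prop) {FF : Filter F} {FG : Filter G}
    (u v : R -> R) (h1 h2 : R -> C) (a : nat -> C) (phi1 phi2 : nat -> R -> R) (N : nat) :
  filterlim u F G -> filterlim v G F ->
  (forall x, h2 (u x) = h1 x) -> (forall k x, phi2 k (u x) = phi1 k x) ->
  (forall y, h1 (v y) = h2 y) -> (forall k y, phi1 k (v y) = phi2 k y) ->
  asymp_expansion F h1 a phi1 N <-> asymp_expansion G h2 a phi2 N.
Proof.
  intros Hu Hv Hhu Hphiu Hhv Hphiv.
  split; [apply asymp_expansion_comp with v|apply asymp_expansion_comp with u]; assumption.
Qed.

Lemma asymp_expansion_transfer (F : (R -> Prop) -> Prop) {FF : Filter F}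
    (h : R -> C) (a : nat -> C) (p q : nat -> R -> R) (N : nat) :
  (forall n, (n <= N)%nat -> bigO_R F (p n) (q n)) ->
  (forall k n, (k <= n <= N)%nat -> little_o_R F (fun x => p k x - q k x) (q n)) ->
  asymp_expansion F h a p N -> asymp_expansion F h a q N.
Proof.
  intros HO Ho H n Hn eps Heps.
  set (A := sum_n (fun k => Cmod (a k)) n).
  assert (HA : 0 <= A) by apply sum_n_Cmod_ge_0.
  assert (Hhp : little_o_R F
            (fun x => Cmod (Cminus (h x) (sum_n (fun k => Cmult (a k) (p k x)) n))) (q n)).
  { apply (little_o_bigO_trans F _ (p n)); [|now apply HO].
    intros e He. generalize (H n Hn e He). apply filter_imp. intros x.
    now rewrite (Rabs_pos_eq (Cmod _)) by apply Cmod_ge_0. }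
  assert (He1 : 0 < eps / 2) by lra.
  assert (He2 : 0 < eps / 2 / (A + 1)) by (apply Rdiv_lt_0_compat; lra).
  assert (Hpq : F (fun x => forall k, (k <= n)%nat ->
                  Rabs (p k x - q k x) <= eps / 2 / (A + 1) * Rabs (q n x))).
  { apply (filter_forall_le F (fun k x =>
      Rabs (p k x - q k x) <= eps / 2 / (A + 1) * Rabs (q n x))).
    intros k Hk. apply (Ho k n); [lia|exact He2]. }
  generalize (filter_and _ _ (Hhp _ He1) Hpq). apply filter_imp.
  intros x [H1 H2].
  pose proof (Cmod_sum_n_sub_le a (fun k => p k x) (fun k => q k x) n _ H2) as H3.
  fold A in H3.
  rewrite (Rabs_pos_eq (Cmod _)) in H1 by apply Cmod_ge_0.
  set (sp := sum_n (fun k => Cmult (a k) (p k x)) n) in *.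
  set (sq := sum_n (fun k => Cmult (a k) (q k x)) n) in *.
  replace (Cminus (h x) sq) with (Cplus (Cminus (h x) sp) (Cminus sp sq))
    by (destruct (h x), sp, sq; apply injective_projections; simpl; ring).
  eapply Rle_trans; [apply Cmod_triangle|].
  assert (eps / 2 / (A + 1) * Rabs (q n x) * A <= eps / 2 * Rabs (q n x)).
  { replace (eps / 2 * Rabs (q n x)) with (eps / 2 / (A + 1) * Rabs (q n x) * (A + 1))
      by (field; lra).
    pose proof (Rabs_pos (q n x)).
    apply Rmult_le_compat_l; [apply Rmult_le_pos|]; lra. }
  lra.
Qed.

Lemma asymp_expansion_equiv (F : (R -> Prop) -> Prop) {FF : Filter F}
    (h : R -> C) (a : nat -> C) (p q : nat -> R -> R) (N : nat) :
  (forall n, (n <= N)%nat -> bigO_R F (p n) (q n)) ->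
  (forall n, (n <= N)%nat -> bigO_R F (q n) (p n)) ->
  (forall k n, (k <= n <= N)%nat -> little_o_R F (fun x => p k x - q k x) (p n)) ->
  asymp_expansion F h a p N <-> asymp_expansion F h a q N.
Proof.
  intros Hpq Hqp Ho. split; apply asymp_expansion_transfer; auto.
  - intros k n Hkn. apply (little_o_bigO_trans F _ (p n)); [apply Ho|apply Hpq]; lia.
  - intros k n Hkn e He. generalize (Ho k n Hkn e He). apply filter_imp.
    intros x. now rewrite Rabs_minus_sym.
Qed.

Lemma pow_sub_le (x y M : R) (j : nat) : Rabs x <= M -> Rabs y <= M ->
  Rabs (x ^ S j - y ^ S j) <= INR (S j) * Rabs (x - y) * M ^ j.
Proof.
  intros Hx Hy. induction j as [|j IH].
  - simpl. rewrite !Rmult_1_r. lra.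
  - replace (x ^ S (S j) - y ^ S (S j)) with (x ^ S j * (x - y) + y * (x ^ S j - y ^ S j))
      by (simpl; ring).
    eapply Rle_trans; [apply Rabs_triang|]. rewrite !Rabs_mult.
    assert (Hxj : Rabs (x ^ S j) <= M ^ S j)
      by (rewrite <- RPow_abs; apply pow_incr; split; [apply Rabs_pos|lra]).
    pose proof (Rabs_pos (x - y)). pose proof (Rabs_pos y).
    assert (Rabs (x ^ S j) * Rabs (x - y) <= M ^ S j * Rabs (x - y))
      by (apply Rmult_le_compat_r; lra).
    assert (Rabs y * Rabs (x ^ S j - y ^ S j) <= M * (INR (S j) * Rabs (x - y) * M ^ j))
      by (apply Rmult_le_compat; auto using Rabs_pos).
    rewrite S_INR. simpl in *. nra.
Qed.

Lemma inv_pow_le (u v : R) (n : nat) : 0 < u -> 0 < v -> v <= 2 * u ->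
  / u ^ n <= 2 ^ n * / v ^ n.
Proof.
  intros Hu Hv Huv.
  assert (0 < u ^ n) by (apply pow_lt; lra). assert (0 < v ^ n) by (apply pow_lt; lra).
  assert (v ^ n <= 2 ^ n * u ^ n) by (rewrite <- Rpow_mult_distr; apply pow_incr; lra).
  replace (2 ^ n * / v ^ n) with (/ (v ^ n / 2 ^ n)) by (field; split; apply pow_nonzero; lra).
  apply Rinv_le_contravar; [apply Rdiv_lt_0_compat; [|apply pow_lt]; lra|].
  apply Rmult_le_reg_r with (2 ^ n); [apply pow_lt; lra|].
  unfold Rdiv. rewrite Rmult_assoc, Rinv_l by (apply pow_nonzero; lra). lra.
Qed.

Lemma pow_sub_mul_pow_le (l L : R) (j n N : nat) :
  1 <= l -> l <= 2 * L -> L <= 2 * l -> (n <= N)%nat ->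
  Rabs (L ^ S j - l ^ S j) * l ^ (n + 2)
  <= INR (S j) * 4 ^ S j * Rabs (L - l) * l ^ N * (l ^ S j * L ^ S j).
Proof.
  intros Hl HlL HLl HnN. set (k := S j).
  assert (Hc : 0 <= INR k * Rabs (L - l))
    by (apply Rmult_le_pos; [apply pos_INR|apply Rabs_pos]).
  assert (Hdiff : Rabs (L ^ k - l ^ k) <= INR k * Rabs (L - l) * (2 ^ j * l ^ j)).
  { rewrite <- Rpow_mult_distr. apply pow_sub_le; rewrite Rabs_pos_eq; lra. }
  assert (Hpow : l ^ (n + 2) * l ^ j <= l ^ N * (l ^ k * l ^ k))
    by (rewrite <- !pow_add; apply Rle_pow; [lra|unfold k; lia]).
  assert (HLk : l ^ k <= 2 ^ k * L ^ k) by (rewrite <- Rpow_mult_distr; apply pow_incr; lra).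
  assert (H4 : 2 ^ j * 2 ^ k <= 4 ^ k).
  { replace 4 with (2 * 2) by ring. rewrite Rpow_mult_distr.
    apply Rmult_le_compat_r; [apply pow_le; lra|apply Rle_pow; [lra|unfold k; lia]]. }
  apply Rle_trans with (INR k * Rabs (L - l) * 2 ^ j * (l ^ (n + 2) * l ^ j)).
  { replace (INR k * Rabs (L - l) * 2 ^ j * (l ^ (n + 2) * l ^ j))
      with (INR k * Rabs (L - l) * (2 ^ j * l ^ j) * l ^ (n + 2)) by ring.
    apply Rmult_le_compat_r; [apply pow_le; lra|exact Hdiff]. }
  apply Rle_trans with (INR k * Rabs (L - l) * 2 ^ j * (l ^ N * (l ^ k * (2 ^ k * L ^ k)))).
  { apply Rmult_le_compat_l; [apply Rmult_le_pos; [lra|apply pow_le; lra]|].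
    eapply Rle_trans; [exact Hpow|].
    apply Rmult_le_compat_l; [apply pow_le; lra|].
    apply Rmult_le_compat_l; [apply pow_le|]; lra. }
  replace (INR k * Rabs (L - l) * 2 ^ j * (l ^ N * (l ^ k * (2 ^ k * L ^ k))))
    with (INR k * Rabs (L - l) * (l ^ N * (l ^ k * L ^ k)) * (2 ^ j * 2 ^ k)) by ring.
  replace (INR k * 4 ^ k * Rabs (L - l) * l ^ N * (l ^ k * L ^ k))
    with (INR k * Rabs (L - l) * (l ^ N * (l ^ k * L ^ k)) * 4 ^ k) by ring.
  apply Rmult_le_compat_l; [|exact H4].
  apply Rmult_le_pos; [lra|]. apply Rmult_le_pos; [|apply Rmult_le_pos]; apply pow_le; lra.
Qed.

(* Stated multiplied by [l ^ (n + 2)]: for [n <= N] the right-hand side is then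
   controlled by the hypothesis [(L - l) * l ^ N = o(l ^ 2)] of the next section. *)
Lemma inv_pow_sub_estimate (l L : R) (k n N : nat) :
  1 <= l -> l <= 2 * L -> L <= 2 * l -> (n <= N)%nat ->
  Rabs (/ l ^ k - / L ^ k) * l ^ (n + 2) <= INR k * 4 ^ k * Rabs (L - l) * l ^ N.
Proof.
  intros Hl HlL HLl HnN.
  destruct k as [|j]; [simpl; rewrite Rminus_diag, Rabs_R0; lra|].
  pose proof (pow_sub_mul_pow_le l L j n N Hl HlL HLl HnN) as Hest.
  set (k := S j) in *.
  assert (Hlk : 0 < l ^ k) by (apply pow_lt; lra).
  assert (HLk : 0 < L ^ k) by (apply pow_lt; lra).
  replace (Rabs (/ l ^ k - / L ^ k) * l ^ (n + 2))
    with (Rabs (L ^ k - l ^ k) * l ^ (n + 2) / (l ^ k * L ^ k)).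
  - apply Rle_div_l; [nra|exact Hest].
  - replace (/ l ^ k - / L ^ k) with ((L ^ k - l ^ k) / (l ^ k * L ^ k)) by (field; lra).
    rewrite Rabs_div, (Rabs_pos_eq (l ^ k * L ^ k)) by nra. field. lra.
Qed.

Lemma bigO_inv_pow (F : (R -> Prop) -> Prop) {FF : Filter F} (u v : R -> R) (n : nat) :
  F (fun x => 0 < u x /\ 0 < v x /\ v x <= 2 * u x) ->
  bigO_R F (fun x => / u x ^ n) (fun x => / v x ^ n).
Proof.
  intros Huv. exists (2 ^ n). split; [apply pow_le; lra|].
  generalize Huv. apply filter_imp. intros x (Hu & Hv & Hle).
  rewrite !Rabs_pos_eq by (left; apply Rinv_0_lt_compat, pow_lt; lra).
  now apply inv_pow_le.
Qed.

Section InversePowerScales.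

Variables (F : (R -> Prop) -> Prop) (l L : R -> R) (N : nat).
Context {FF : Filter F}.
Hypothesis HN : (1 <= N)%nat.
Hypothesis Hl : F (fun x => 1 <= l x).
Hypothesis HLl : little_o_R F (fun x => (L x - l x) * l x ^ N) (fun x => l x ^ 2).

Lemma scales_comparable : F (fun x => 1 <= l x /\ l x <= 2 * L x /\ L x <= 2 * l x).
Proof.
  generalize (filter_and _ _ Hl (HLl (1 / 2) ltac:(lra))). apply filter_imp.
  intros x [H1 H2].
  rewrite Rabs_mult, (Rabs_pos_eq (l x ^ N)), (Rabs_pos_eq (l x ^ 2)) in H2
    by (apply pow_le; lra).
  assert (l x <= l x ^ N) by (rewrite <- (pow_1 (l x)) at 1; apply Rle_pow; [lra|lia]).
  assert (Rabs (L x - l x) * l x <= 1 / 2 * l x ^ 2).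
  { eapply Rle_trans; [|exact H2]. apply Rmult_le_compat_l; [apply Rabs_pos|lra]. }
  assert (Rabs (L x - l x) <= l x / 2) by (simpl in *; nra).
  pose proof (Rle_abs (L x - l x)). pose proof (Rle_abs (- (L x - l x))).
  rewrite Rabs_Ropp in *. lra.
Qed.

Lemma inv_pow_bigO n : bigO_R F (fun x => / l x ^ n) (fun x => / L x ^ n).
Proof.
  apply (bigO_inv_pow F). generalize scales_comparable. apply filter_imp. intros; lra.
Qed.

Lemma inv_pow_bigO_rev n : bigO_R F (fun x => / L x ^ n) (fun x => / l x ^ n).
Proof.
  apply (bigO_inv_pow F). generalize scales_comparable. apply filter_imp. intros; lra.
Qed.

Lemma inv_pow_sub_little_o k n : (k <= n <= N)%nat ->
  little_o_R F (fun x => / l x ^ k - / L x ^ k) (fun x => / l x ^ n).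
Proof.
  intros Hkn eps Heps.
  set (c := INR n * 4 ^ n).
  assert (Hc : 0 <= c) by (apply Rmult_le_pos; [apply pos_INR|apply pow_le; lra]).
  assert (Hck : INR k * 4 ^ k <= c).
  { apply Rmult_le_compat; [apply pos_INR|apply pow_le; lra|apply le_INR; lia|].
    apply Rle_pow; [lra|lia]. }
  assert (Hd : 0 < eps / (c + 1)) by (apply Rdiv_lt_0_compat; lra).
  generalize (filter_and _ _ scales_comparable (HLl _ Hd)). apply filter_imp.
  intros x [(H1 & H2 & H3) Ho].
  rewrite Rabs_mult, (Rabs_pos_eq (l x ^ N)), (Rabs_pos_eq (l x ^ 2)) in Ho
    by (apply pow_le; lra).
  assert (Hln : 0 < l x ^ n) by (apply pow_lt; lra).
  rewrite (Rabs_pos_eq (/ l x ^ n)) by (left; apply Rinv_0_lt_compat; lra).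
  pose proof (inv_pow_sub_estimate (l x) (L x) k n N H1 H2 H3 ltac:(lia)) as Hest.
  rewrite pow_add in Hest.
  assert (Hl2 : 0 < l x ^ 2) by (apply pow_lt; lra).
  assert (Rabs (/ l x ^ k - / L x ^ k) * l x ^ n * l x ^ 2 <= eps * l x ^ 2).
  { eapply Rle_trans; [rewrite Rmult_assoc; exact Hest|].
    apply Rle_trans with (c * (eps / (c + 1) * l x ^ 2)).
    { replace (INR k * 4 ^ k * Rabs (L x - l x) * l x ^ N)
        with (INR k * 4 ^ k * (Rabs (L x - l x) * l x ^ N)) by ring.
      apply Rmult_le_compat; try lra.
      - apply Rmult_le_pos; [apply pos_INR|apply pow_le; lra].
      - apply Rmult_le_pos; [apply Rabs_pos|apply pow_le; lra]. }
    replace (eps * l x ^ 2) with ((c + 1) * (eps / (c + 1) * l x ^ 2)) by (field; lra).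
    apply Rmult_le_compat_r; [|lra]. apply Rmult_le_pos; lra. }
  apply Rmult_le_reg_r with (l x ^ n); [exact Hln|].
  rewrite Rmult_assoc, Rinv_l, Rmult_1_r by lra. nra.
Qed.

Lemma asymp_expansion_inv_pow_iff (h : R -> C) (a : nat -> C) :
  asymp_expansion F h a (fun k x => / l x ^ k) N <->
  asymp_expansion F h a (fun k x => / L x ^ k) N.
Proof.
  apply asymp_expansion_equiv; auto using inv_pow_bigO, inv_pow_bigO_rev,
    inv_pow_sub_little_o.
Qed.

End InversePowerScales.

(** * Logarithmic scales *)

Lemma pow_le_fact_exp (y : R) (m : nat) : 0 <= y -> y ^ m <= INR (fact m) * exp y.
Proof.
  intros Hy.
  assert (Hfact : 0 < INR (fact m)) by (apply lt_0_INR, lt_O_fact).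
  assert (Hterm : y ^ m / INR (fact m) <= exp y).
  { eapply Rle_trans; [|apply (exp_ge_taylor y m Hy)].
    destruct m as [|j]; [simpl; lra|].
    rewrite tech5.
    assert (0 <= sum_f_R0 (fun k => y ^ k / INR (fact k)) j).
    { apply cond_pos_sum. intros k. apply Rdiv_le_0_compat; [apply pow_le; lra|].
      apply lt_0_INR, lt_O_fact. }
    lra. }
  apply Rle_div_l in Hterm; [lra|lra].
Qed.

Lemma eventually_ln_ge (M : R) : Rbar_locally p_infty (fun x => M <= ln x).
Proof.
  apply (is_lim_ln_p (fun y => M <= y)). exists M. intros y Hy. lra.
Qed.

Lemma ln_pow_little_o_id (N : nat) :
  little_o_R (Rbar_locally p_infty) (fun x => ln x ^ N) (fun x => x).
Proof.
  intros eps Heps.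
  set (K := INR (fact (S N))).
  assert (HK : 0 < K) by (apply lt_0_INR, lt_O_fact).
  generalize (eventually_ln_ge (Rmax 1 (K / eps))). apply filter_imp. intros x Hx.
  pose proof (Rmax_l 1 (K / eps)). pose proof (Rmax_r 1 (K / eps)).
  assert (Hx0 : 0 < x).
  { destruct (Rle_lt_dec x 0) as [Hle|]; [|lra].
    unfold ln in Hx. destruct (Rlt_dec 0 x); lra. }
  rewrite <- (exp_ln x) at 2 by exact Hx0.
  set (y := ln x) in *.
  assert (Hy : y ^ S N <= K * exp y) by (apply pow_le_fact_exp; lra).
  assert (HyK : K <= eps * y).
  { assert (HKy : K / eps <= y) by lra. apply Rle_div_l in HKy; lra. }
  rewrite Rabs_pos_eq by (apply pow_le; lra).
  rewrite Rabs_pos_eq by (left; apply exp_pos).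
  simpl in Hy.
  assert (0 <= y ^ N) by (apply pow_le; lra).
  assert (K * exp y <= eps * y * exp y)
    by (apply Rmult_le_compat_r; [left; apply exp_pos|lra]).
  apply Rmult_le_reg_l with y; lra.
Qed.

Lemma little_o_ln_scale_of_bound (L : R -> R) (C : R) (N : nat) :
  (forall x, 1 <= x -> Rabs (L x - ln x) <= C / x) ->
  little_o_R (Rbar_locally p_infty) (fun x => (L x - ln x) * ln x ^ N) (fun x => ln x ^ 2).
Proof.
  intros HB eps Heps.
  pose proof (Rabs_pos C) as HC.
  assert (Hd : 0 < eps / (Rabs C + 1)) by (apply Rdiv_lt_0_compat; lra).
  assert (Hx1 : Rbar_locally p_infty (fun x => 1 <= x)) by (exists 1; intros; lra).
  generalize (filter_and _ _ Hx1 (filter_and _ _ (eventually_ln_ge 1) (ln_pow_little_o_id N _ Hd))).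
  apply filter_imp. intros x (H1 & H2 & H3).
  rewrite Rabs_mult, (Rabs_pos_eq (ln x ^ N)), (Rabs_pos_eq (ln x ^ 2)) in * by (apply pow_le; lra).
  rewrite (Rabs_pos_eq x) in H3 by lra.
  assert (HLx : Rabs (L x - ln x) * x <= C).
  { pose proof (HB x H1) as Hb. apply (Rmult_le_compat_r x) in Hb; [|lra].
    replace (C / x * x) with C in Hb by (field; lra). exact Hb. }
  assert (Hsq : 1 <= ln x ^ 2) by (simpl; nra).
  assert (Rabs (L x - ln x) * ln x ^ N <= Rabs (L x - ln x) * (eps / (Rabs C + 1) * x))
    by (apply Rmult_le_compat_l; [apply Rabs_pos|exact H3]).
  assert (eps / (Rabs C + 1) * C <= eps).
  { replace eps with (eps / (Rabs C + 1) * (Rabs C + 1)) at 2 by (field; lra).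
    apply Rmult_le_compat_l; [lra|]. pose proof (Rle_abs C). lra. }
  assert (Rabs (L x - ln x) * (eps / (Rabs C + 1) * x) <= eps / (Rabs C + 1) * C).
  { replace (Rabs (L x - ln x) * (eps / (Rabs C + 1) * x))
      with (eps / (Rabs C + 1) * (Rabs (L x - ln x) * x)) by ring.
    apply Rmult_le_compat_l; lra. }
  nra.
Qed.

Lemma little_o_mul_pow_of_powerRZ (F : (R -> Prop) -> Prop) {FF : Filter F}
    (u l : R -> R) (N : nat) :
  F (fun x => 0 < l x) ->
  little_o_R F u (fun x => powerRZ (l x) (- (Z.of_nat N - 2))) ->
  little_o_R F (fun x => u x * l x ^ N) (fun x => l x ^ 2).
Proof.
  intros Hpos Ho eps Heps. generalize (filter_and _ _ Hpos (Ho eps Heps)). apply filter_imp.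
  intros x [Hl Hu].
  assert (Hp : 0 < powerRZ (l x) (- (Z.of_nat N - 2))) by (apply powerRZ_lt; lra).
  assert (Eq : powerRZ (l x) (- (Z.of_nat N - 2)) * l x ^ N = l x ^ 2).
  { rewrite !pow_powerRZ, <- powerRZ_add by lra. f_equal. lia. }
  rewrite (Rabs_pos_eq (powerRZ _ _)) in Hu by lra.
  rewrite Rabs_mult, !(Rabs_pos_eq (l x ^ _)) by (apply pow_le; lra).
  rewrite <- Eq, <- Rmult_assoc.
  apply Rmult_le_compat_r; [apply pow_le; lra|exact Hu].
Qed.

(** * Harmonic numbers and the Euler-Mascheroni constant *)

(* [pred] makes [harmonic 0 = harmonic 1 = 1], as in the definition of [euler_gamma]. *)
Definition harmonic (n : nat) : R := sum_n (fun k => / INR (S k)) (pred n).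

Lemma harmonic_1 : harmonic 1 = 1.
Proof. unfold harmonic; simpl. rewrite sum_O. simpl. lra. Qed.

Lemma harmonic_S (n : nat) : (1 <= n)%nat -> harmonic (S n) = harmonic n + / INR (S n).
Proof.
  intros Hn. unfold harmonic. destruct n as [|n]; [lia|]. simpl pred. now rewrite sum_Sn.
Qed.

Lemma ln_le_sub_1 (y : R) : 0 < y -> ln y <= y - 1.
Proof.
  intros Hy. rewrite <- (ln_exp (y - 1)). apply ln_le; [exact Hy|].
  pose proof (exp_ineq1_le (y - 1)). lra.
Qed.

Lemma ln_succ_sub_bounds (x : R) : 0 < x -> / (x + 1) <= ln (x + 1) - ln x <= / x.
Proof.
  intros Hx. split.
  - pose proof (ln_le_sub_1 (x / (x + 1)) ltac:(apply Rdiv_lt_0_compat; lra)) as H.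
    rewrite ln_div in H by lra.
    replace (x / (x + 1) - 1) with (- / (x + 1)) in H by (field; lra). lra.
  - pose proof (ln_le_sub_1 ((x + 1) / x) ltac:(apply Rdiv_lt_0_compat; lra)) as H.
    rewrite ln_div in H by lra.
    replace ((x + 1) / x - 1) with (/ x) in H by (field; lra). lra.
Qed.

Definition euler_upper (n : nat) : R := harmonic n - ln (INR n).
Definition euler_lower (n : nat) : R := harmonic n - ln (INR n + 1).

Lemma euler_upper_decr (n : nat) : euler_upper (S n) <= euler_upper n.
Proof.
  unfold euler_upper. destruct n as [|n].
  - change (harmonic 0) with (harmonic 1). simpl INR. rewrite ln_1.
    replace (ln 0) with 0; [lra|].
    unfold ln. destruct (Rlt_dec 0 0) as [H0|]; [destruct (Rlt_irrefl 0 H0)|reflexivity].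
  - rewrite harmonic_S by lia. rewrite (S_INR (S n)).
    pose proof (ln_succ_sub_bounds (INR (S n)) ltac:(apply lt_0_INR; lia)).
    rewrite S_INR in *. lra.
Qed.

Lemma euler_lower_incr (n : nat) : (1 <= n)%nat -> euler_lower n <= euler_lower (S n).
Proof.
  intros Hn. unfold euler_lower. rewrite harmonic_S by exact Hn.
  pose proof (ln_succ_sub_bounds (INR (S n)) ltac:(apply lt_0_INR; lia)).
  rewrite !S_INR in *. lra.
Qed.

Lemma euler_lower_le_upper (n m : nat) : (1 <= n)%nat -> euler_lower n <= euler_upper m.
Proof.
  intros Hn.
  assert (Hlow : forall k, (n <= k)%nat -> euler_lower n <= euler_lower k).
  { induction 1 as [|k Hk IH]; [lra|]. pose proof (euler_lower_incr k ltac:(lia)). lra. }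
  assert (Hup : forall k, (m <= k)%nat -> euler_upper k <= euler_upper m).
  { induction 1 as [|k Hk IH]; [lra|]. pose proof (euler_upper_decr k). lra. }
  specialize (Hlow (Nat.max n m) ltac:(lia)). specialize (Hup (Nat.max n m) ltac:(lia)).
  set (k := Nat.max n m) in *.
  assert (Hk1 : 1 <= INR k) by (apply (le_INR 1); unfold k; lia).
  assert (euler_lower k <= euler_upper k).
  { unfold euler_lower, euler_upper.
    pose proof (ln_increasing (INR k) (INR k + 1) ltac:(lra) ltac:(lra)). lra. }
  lra.
Qed.

Lemma euler_gamma_is_lim : is_lim_seq euler_upper euler_gamma.
Proof.
  destruct (ex_finite_lim_seq_decr euler_upper (euler_lower 1) euler_upper_decr
              (fun m => euler_lower_le_upper 1 m (le_n 1))) as [l Hl].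
  unfold euler_gamma. fold harmonic.
  change (is_lim_seq euler_upper (real (Lim_seq euler_upper))).
  now rewrite (is_lim_seq_unique _ _ Hl).
Qed.

Lemma euler_gamma_bounds (n : nat) : (1 <= n)%nat ->
  euler_lower n <= euler_gamma <= euler_upper n.
Proof.
  intros Hn. split.
  - exact (is_lim_seq_le (fun _ => euler_lower n) euler_upper (euler_lower n) euler_gamma
             (fun m => euler_lower_le_upper n m Hn) (is_lim_seq_const _) euler_gamma_is_lim).
  - exact (is_lim_seq_decr_compare _ _ euler_gamma_is_lim euler_upper_decr n).
Qed.

(** * Interpolated harmonic numbers *)

Definition harmonic_integrand (y t : R) : R := (1 - Rpower t y) / (1 - t).

Lemma filterlim_at_right_of_eps (f : R -> R) (a la : R) :
  (forall e, 0 < e -> exists d, 0 < d /\ forall t, a < t < a + d -> Rabs (f t - la) < e) ->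
  filterlim f (at_right a) (locally la).
Proof.
  intros H. apply (filterlim_locally f la). intros [e He].
  destruct (H e He) as [d [Hd Hf]]. exists (mkposreal d Hd). intros t Ht Hat.
  apply Hf. split; [exact Hat|]. apply Rabs_lt_between' in Ht. simpl in Ht. lra.
Qed.

Lemma filterlim_at_left_of_eps (f : R -> R) (b lb : R) :
  (forall e, 0 < e -> exists d, 0 < d /\ forall t, b - d < t < b -> Rabs (f t - lb) < e) ->
  filterlim f (at_left b) (locally lb).
Proof.
  intros H. apply (filterlim_locally f lb). intros [e He].
  destruct (H e He) as [d [Hd Hf]]. exists (mkposreal d Hd). intros t Ht Htb.
  apply Hf. split; [|exact Htb]. apply Rabs_lt_between' in Ht. simpl in Ht. lra.
Qed.

Lemma harmonic_integrand_lim_0 (y : R) : 0 < y ->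
  filterlim (harmonic_integrand y) (at_right 0) (locally 1).
Proof.
  intros Hy. apply filterlim_at_right_of_eps. intros e He.
  set (d0 := Rpower (e / 4) (/ y)).
  assert (Hd0 : 0 < d0) by (unfold d0, Rpower; apply exp_pos).
  exists (Rmin (1 / 2) (Rmin (e / 4) d0)).
  split; [repeat apply Rmin_glb_lt; lra|]. intros t Ht.
  pose proof (Rmin_l (1 / 2) (Rmin (e / 4) d0)).
  pose proof (Rmin_r (1 / 2) (Rmin (e / 4) d0)).
  pose proof (Rmin_l (e / 4) d0). pose proof (Rmin_r (e / 4) d0).
  assert (Hpow : Rpower t y < e / 4).
  { replace (e / 4) with (Rpower d0 y)
      by (unfold d0; rewrite Rpower_mult, Rinv_l, Rpower_1 by lra; reflexivity).
    apply Rlt_Rpower_l; lra. }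
  assert (Hpos : 0 < Rpower t y) by (unfold Rpower; apply exp_pos).
  unfold harmonic_integrand.
  replace ((1 - Rpower t y) / (1 - t) - 1) with ((t - Rpower t y) / (1 - t)) by (field; lra).
  rewrite Rabs_div, (Rabs_pos_eq (1 - t)) by lra.
  apply Rlt_div_l; [lra|].
  apply Rabs_lt_between'. split; nra.
Qed.

Lemma harmonic_integrand_lim_1 (y : R) :
  filterlim (harmonic_integrand y) (at_left 1) (locally y).
Proof.
  apply filterlim_at_left_of_eps. intros e He.
  destruct (derivable_pt_lim_power 1 y Rlt_0_1 e He) as [[d Hd] Hder].
  exists (Rmin d 1). split; [apply Rmin_glb_lt; lra|]. intros t Ht.
  pose proof (Rmin_l d 1). pose proof (Rmin_r d 1).
  specialize (Hder (t - 1) ltac:(lra)). simpl in Hder.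
  rewrite Rabs_left in Hder by lra.
  replace (1 + (t - 1)) with t in Hder by ring.
  unfold Rpower at 2 3 in Hder. rewrite ln_1, !Rmult_0_r, exp_0 in Hder.
  unfold harmonic_integrand.
  replace ((1 - Rpower t y) / (1 - t)) with ((Rpower t y - 1) / (t - 1)) by (field; lra).
  rewrite Rmult_1_r in Hder. apply Hder. lra.
Qed.

Lemma harmonic_integrand_continuous (y c : R) : 0 < c < 1 ->
  continuous (harmonic_integrand y) c.
Proof.
  intros Hc. apply continuity_pt_filterlim. unfold harmonic_integrand.
  apply (continuity_pt_div (fun t => 1 - Rpower t y) (fun t => 1 - t)); [| |lra].
  - apply continuity_pt_minus; [apply continuity_pt_const; intros u v; reflexivity|].
    apply derivable_continuous_pt. exists (y * Rpower c (y - 1)).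
    apply derivable_pt_lim_power; lra.
  - apply continuity_pt_minus; [apply continuity_pt_const; intros u v; reflexivity|].
    apply continuity_pt_id.
Qed.

(* For [y > 0] the integrand tends to 1 at [0+] and to [y], the derivative of [t ^ y]
   at 1, at [1-]; so it extends continuously to [0, 1]. *)
Lemma harmonic_integrand_integrable (y : R) : 0 <= y ->
  ex_RInt (harmonic_integrand y) 0 1.
Proof.
  intros Hy. destruct (Req_dec y 0) as [->|Hy0].
  - apply (ex_RInt_ext (fun _ => 0)); [|apply ex_RInt_const].
    intros t _. unfold harmonic_integrand, Rpower.
    rewrite Rmult_0_l, exp_0, Rminus_diag. unfold Rdiv. now rewrite Rmult_0_l.
  - destruct (C0_extension_lt (harmonic_integrand y) 1 y 0 1 Rlt_0_1
                (fun c Hc => harmonic_integrand_continuous y c Hc)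
                (harmonic_integrand_lim_0 y ltac:(lra))
                (harmonic_integrand_lim_1 y)) as [g [Hg [Heq _]]].
    apply (ex_RInt_ext g).
    + rewrite Rmin_left, Rmax_right by lra. intros t Ht. now apply Heq.
    + apply (@ex_RInt_continuous R_CompleteNormedModule). intros z _. apply Hg.
Qed.

Lemma Hx_le (y1 y2 : R) : 0 <= y1 -> y1 <= y2 -> Hx y1 <= Hx y2.
Proof.
  intros H1 H2. apply RInt_le; [lra|apply harmonic_integrand_integrable; lra..|].
  intros t Ht. unfold Rdiv. apply Rmult_le_compat_r; [left; apply Rinv_0_lt_compat; lra|].
  assert (ln t < 0) by (rewrite <- ln_1; apply ln_increasing; lra).
  assert (Rpower t y2 <= Rpower t y1); [|lra].
  unfold Rpower. destruct (Req_dec y1 y2) as [->|Hne]; [lra|].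
  left. apply exp_increasing. nra.
Qed.

Lemma Hx_0 : Hx 0 = 0.
Proof.
  unfold Hx. rewrite (RInt_ext _ (fun _ => 0)), RInt_const.
  - unfold scal; simpl; unfold mult; simpl. ring.
  - intros t _. unfold Rpower. rewrite Rmult_0_l, exp_0, Rminus_diag.
    unfold Rdiv. now rewrite Rmult_0_l.
Qed.

Lemma Hx_nat_succ (n : nat) : Hx (INR (S n)) = Hx (INR n) + / INR (S n).
Proof.
  assert (HS : 0 < INR (S n)) by (apply lt_0_INR; lia).
  assert (Hpow : RInt (fun t => t ^ n) 0 1 = / INR (S n)).
  { apply is_RInt_unique.
    replace (/ INR (S n)) with (1 ^ S n / INR (S n) - 0 ^ S n / INR (S n));
      [apply is_RInt_pow|].
    rewrite pow1, pow_i by lia. field. lra. }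
  unfold Hx. rewrite <- Hpow.
  rewrite <- (RInt_plus (V := R_CompleteNormedModule));
    [|apply harmonic_integrand_integrable, pos_INR|eexists; apply is_RInt_pow].
  apply RInt_ext. rewrite Rmin_left, Rmax_right by lra. intros t Ht.
  rewrite !Rpower_pow by lra. unfold plus; simpl. field. lra.
Qed.

Lemma Hx_nat (n : nat) : (1 <= n)%nat -> Hx (INR n) = harmonic n.
Proof.
  induction 1 as [|n Hn IH].
  - rewrite Hx_nat_succ, harmonic_1. change (INR 0) with 0. rewrite Hx_0. simpl. field.
  - rewrite Hx_nat_succ, IH, harmonic_S by exact Hn. reflexivity.
Qed.

(* The range of [y] covers both [Hx x] and [Psi x = Hx (x - 1) - euler_gamma]. *)
Lemma Hx_sub_ln_bound (x y : R) : 1 <= x -> 0 <= y -> x - 1 <= y <= x ->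
  Rabs (Hx y - euler_gamma - ln x) <= 4 / x.
Proof.
  intros Hx1 Hy0 Hy.
  destruct (nfloor_ex x ltac:(lra)) as [[|m] [Hfl Hfu]]; [simpl in Hfu; lra|].
  set (n := S m) in *.
  assert (Hn : (1 <= n)%nat) by (unfold n; lia).
  assert (Hn1 : 1 <= INR n) by (apply (le_INR 1); exact Hn).
  assert (HSn : INR (S n) = INR n + 1) by apply S_INR.
  assert (Hm : INR n = INR m + 1) by apply S_INR.
  destruct (euler_gamma_bounds n Hn) as [Hg1 Hg2]. unfold euler_lower, euler_upper in *.
  pose proof (ln_succ_sub_bounds (INR n) ltac:(lra)) as [_ Hstep].
  assert (Hl1 : ln (INR n) <= ln x) by (apply ln_le; lra).
  assert (Hl2 : ln x <= ln (INR n + 1)) by (apply ln_le; lra).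
  assert (Hup : Hx y <= harmonic n + / (INR n + 1)).
  { rewrite <- HSn, <- (Hx_nat n Hn), <- Hx_nat_succ. apply Hx_le; lra. }
  assert (Hlow : harmonic n - / INR n <= Hx y).
  { rewrite <- (Hx_nat n Hn). unfold n at 1. rewrite Hx_nat_succ.
    replace (Hx (INR m) + / INR (S m) - / INR n) with (Hx (INR m)) by (unfold n; ring).
    apply Hx_le; [apply pos_INR|lra]. }
  assert (Hinv1 : / (INR n + 1) <= / INR n) by (apply Rinv_le_contravar; lra).
  assert (Hinv2 : / INR n <= 2 / x).
  { replace (2 / x) with (/ (x / 2)) by (field; lra). apply Rinv_le_contravar; lra. }
  apply Rabs_le. unfold Rdiv in *. split; lra.
Qed.

(** * Changes of variable between [0+] and [+oo] *)

Lemma filterlim_Rinv_p_infty : filterlim Rinv (Rbar_locally p_infty) (at_right 0).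
Proof.
  intros P HP.
  assert (Hpos : Rbar_locally p_infty (fun x => 0 < x)) by (exists 0; auto).
  assert (Hne : p_infty <> 0) by discriminate.
  assert (Hinv : Rbar_locally p_infty (fun x => 0 < / x -> P (/ x)))
    by exact (filterlim_Rbar_inv p_infty Hne _ HP).
  unfold filtermap. generalize (filter_and _ _ Hinv Hpos).
  apply filter_imp. intros x [H1 H2]. apply H1. now apply Rinv_0_lt_compat.
Qed.

Lemma filterlim_Rinv_ln : filterlim (fun x => / ln x) (Rbar_locally p_infty) (at_right 0).
Proof. exact (filterlim_comp _ _ _ ln Rinv _ _ _ is_lim_ln_p filterlim_Rinv_p_infty). Qed.

Lemma filterlim_exp_Rinv : filterlim (fun t => exp (/ t)) (at_right 0) (Rbar_locally p_infty).
Proof. exact (filterlim_comp _ _ _ Rinv exp _ _ _ filterlim_Rinv_0_right is_lim_exp_p). Qed.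

Lemma asymp_expansion_right_0_iff_inv (f : R -> C) (a : nat -> C) (N : nat) :
  asymp_expansion (at_right 0) f a (fun n x => x ^ n) N <->
  asymp_expansion (Rbar_locally p_infty) (fun x => f (/ ln (exp x))) a (fun n x => / x ^ n) N.
Proof.
  apply (asymp_expansion_change_var _ _ Rinv Rinv);
    [exact filterlim_Rinv_0_right|exact filterlim_Rinv_p_infty|intros..].
  - now rewrite ln_exp, Rinv_inv.
  - now rewrite pow_inv, Rinv_inv.
  - now rewrite ln_exp.
  - now rewrite pow_inv.
Qed.

Lemma asymp_expansion_right_0_iff_inv_ln (f : R -> C) (a : nat -> C) (N : nat) :
  asymp_expansion (at_right 0) f a (fun n x => x ^ n) N <->
  asymp_expansion (Rbar_locally p_infty) (fun x => f (/ ln x)) a (fun n x => / ln x ^ n) N.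
Proof.
  apply (asymp_expansion_change_var _ _ (fun t => exp (/ t)) (fun x => / ln x));
    [exact filterlim_exp_Rinv|exact filterlim_Rinv_ln|intros..].
  - now rewrite ln_exp, Rinv_inv.
  - now rewrite ln_exp, pow_inv, Rinv_inv.
  - reflexivity.
  - now rewrite pow_inv.
Qed.

Lemma asymp_expansion_inv_ln_iff (h : R -> C) (a : nat -> C) (N : nat) (L : R -> R) :
  (1 <= N)%nat ->
  little_o_R (Rbar_locally p_infty) (fun x => (L x - ln x) * ln x ^ N) (fun x => ln x ^ 2) ->
  asymp_expansion (Rbar_locally p_infty) h a (fun n x => / ln x ^ n) N <->
  asymp_expansion (Rbar_locally p_infty) h a (fun n x => / L x ^ n) N.
Proof.
  intros HN HL. apply asymp_expansion_inv_pow_iff;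
    [apply Rbar_locally_filter|exact HN|apply eventually_ln_ge|exact HL].
Qed.

Theorem proposition7p5 (f : R -> C) (a : nat -> C) (N : nat) (L : R -> R)
  (HN : (1 <= N)%nat)
  (HL : little_o_R (Rbar_locally p_infty) (fun x => L x - ln x)
          (fun x => powerRZ (ln x) (- (Z.of_nat N - 2)))) :
  let g := fun x : R => f (/ ln x) in
  let E1 := asymp_expansion (at_right 0) f a (fun n x => x ^ n) N in
  let E2 := asymp_expansion (Rbar_locally p_infty) (fun x => g (exp x)) a
              (fun n x => / x ^ n) N in
  let E3 := asymp_expansion (Rbar_locally p_infty) g a
              (fun n x => / (L x) ^ n) N in
  let E4 := asymp_expansion (Rbar_locally p_infty) g a
              (fun n x => / (ln x) ^ n) N in
  let E5 := asymp_expansion (Rbar_locally p_infty) g a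
              (fun n x => / (Hx x - euler_gamma) ^ n) N in
  let E6 := asymp_expansion (Rbar_locally p_infty) g a
              (fun n x => / (Psi x) ^ n) N in
  (E1 <-> E2) /\ (E1 <-> E3) /\ (E1 <-> E4) /\ (E1 <-> E5) /\ (E1 <-> E6).
Proof.
  cbv zeta.
  split; [|split; [|split; [|split]]].
  - apply asymp_expansion_right_0_iff_inv.
  - rewrite asymp_expansion_right_0_iff_inv_ln. apply asymp_expansion_inv_ln_iff; [exact HN|].
    apply (little_o_mul_pow_of_powerRZ _ (fun x => L x - ln x)); [|exact HL].
    generalize (eventually_ln_ge 1). apply filter_imp. intros; lra.
  - apply asymp_expansion_right_0_iff_inv_ln.
  - rewrite asymp_expansion_right_0_iff_inv_ln. apply asymp_expansion_inv_ln_iff; [exact HN|].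
    apply (little_o_ln_scale_of_bound _ 4). intros x Hx1.
    apply (Hx_sub_ln_bound x x); lra.
  - rewrite asymp_expansion_right_0_iff_inv_ln. apply asymp_expansion_inv_ln_iff; [exact HN|].
    apply (little_o_ln_scale_of_bound _ 4). intros x Hx1.
    apply (Hx_sub_ln_bound x (x - 1)); lra.
Qed.
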